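(* Let $(M,d)$ be a complete geodesic space with $\mathrm{curv}(M)\le 0$ and finite diameter $\mathrm{diam}(M)>0$. Then for every $p\in M$, the function $x\mapsto d^2(p,x)$ is geodesically $\beta$-expconcave for all $0<\beta\le 1/(2\,\mathrm{diam}(M)^2)$.
   Context: A geodesic is a path $\gamma:[0,1]\to M$ with $d(\gamma(s),\gamma(t))=|t-s|\,d(\gamma(0),\gamma(1))$; a geodesic space is one where any two points are joined by a geodesic. $\mathrm{curv}(M)\le 0$ means: for all $p,x,y\in M$, every geodesic $\gamma:[0,1]\to M$ from $x$ to $y$ and every $t\in[0,1]$, $d^2(p,\gamma(t))\le (1-t)d^2(p,x)+t\,d^2(p,y)-t(1-t)d^2(x,y)$. A function $f:M\to\mathbb R$ is geodesically concave if for every geodesic $\gamma$, $t\mapsto f(\gamma(t))$ is concave on $[0,1]$; for $\beta>0$, $f$ is geodesically $\beta$-expconcave if $\exp(-\beta f)$ is geodesically concave. *)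

From Stdlib Require Import Reals.
Open Scope R_scope.

Definition is_metric {M : Type} (d : M -> M -> R) : Prop :=
  (forall x y, 0 <= d x y) /\
  (forall x y, d x y = 0 <-> x = y) /\
  (forall x y, d x y = d y x) /\
  (forall x y z, d x z <= d x y + d y z).

Definition is_complete {M : Type} (d : M -> M -> R) : Prop :=
  forall u : nat -> M,
    (forall eps, 0 < eps -> exists N, forall m n, (N <= m)%nat -> (N <= n)%nat ->
        d (u m) (u n) < eps) ->
    exists l : M, forall eps, 0 < eps -> exists N, forall n, (N <= n)%nat ->
        d (u n) l < eps.

(* A geodesic: a path gamma : [0,1] -> M (represented by a function on R whose
   values outside [0,1] are irrelevant) with
   d(gamma s, gamma t) = |t - s| d(gamma 0, gamma 1) for s,t in [0,1]. *)
Definition is_geodesic {M : Type} (d : M -> M -> R) (gamma : R -> M) : Prop :=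
  forall s t, 0 <= s <= 1 -> 0 <= t <= 1 ->
    d (gamma s) (gamma t) = Rabs (t - s) * d (gamma 0) (gamma 1).

Definition is_geodesic_space {M : Type} (d : M -> M -> R) : Prop :=
  forall x y : M, exists gamma : R -> M,
    is_geodesic d gamma /\ gamma 0 = x /\ gamma 1 = y.

Definition curv_le0 {M : Type} (d : M -> M -> R) : Prop :=
  forall (p x y : M) (gamma : R -> M),
    is_geodesic d gamma -> gamma 0 = x -> gamma 1 = y ->
    forall t, 0 <= t <= 1 ->
      (d p (gamma t))^2 <= (1 - t) * (d p x)^2 + t * (d p y)^2
                           - t * (1 - t) * (d x y)^2.

Definition is_diameter {M : Type} (d : M -> M -> R) (D : R) : Prop :=
  is_lub (fun r => exists x y : M, r = d x y) D.

Definition concave_on_01 (g : R -> R) : Prop :=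
  forall s t l, 0 <= s <= 1 -> 0 <= t <= 1 -> 0 <= l <= 1 ->
    (1 - l) * g s + l * g t <= g ((1 - l) * s + l * t).

Definition geod_concave {M : Type} (d : M -> M -> R) (f : M -> R) : Prop :=
  forall gamma : R -> M, is_geodesic d gamma -> concave_on_01 (fun t => f (gamma t)).

Definition geod_expconcave {M : Type} (d : M -> M -> R) (beta : R) (f : M -> R) : Prop :=
  geod_concave d (fun x => exp (- beta * f x)).

(* Fix a geodesic gamma and parameters s, t, l in [0,1].  Restricting gamma to
   the segment between gamma s and gamma t is again a geodesic, so the
   curvature bound says that d^2(p, gamma((1-l)s + l t)) <= q(l), where
     q(l) = (1-l) a^2 + l b^2 - l(1-l) c^2 = c^2 l^2 + (b^2 - a^2 - c^2) l + a^2
   with a = d(p, gamma s), b = d(p, gamma t), c = d(gamma s, gamma t).  Since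
   exp(-beta .) is decreasing it suffices to show that exp(-beta q) lies above
   its chord on [0,1].  This is a purely one-dimensional fact: the triangle
   inequality makes the discriminant of q nonpositive, so q'^2 <= 4 c^2 q, and
   q <= diam^2 on [0,1]; together with 2 beta diam^2 <= 1 this forces the second
   derivative (beta^2 q'^2 - 2 beta c^2) exp(-beta q) to be nonpositive, and a
   function with nonpositive second derivative lies above its chords. *)

From Stdlib Require Import Reals Lra Psatz.
From Coquelicot Require Import Coquelicot.
Open Scope R_scope.

(* A twice differentiable function with nonpositive second derivative on [0,1]
   lies above the chord joining its values at 0 and 1.  Proof: otherwise the
   mean value theorem gives slopes f'(x1) < f'(x2) with x1 < x2, and a third
   application produces a point where f'' > 0. *)
Lemma chord_le_of_second_derivative_nonpos (f f' f'' : R -> R) :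
  (forall t, 0 <= t <= 1 -> derivable_pt_lim f t (f' t)) ->
  (forall t, 0 <= t <= 1 -> derivable_pt_lim f' t (f'' t)) ->
  (forall t, 0 <= t <= 1 -> f'' t <= 0) ->
  forall l, 0 <= l <= 1 -> (1 - l) * f 0 + l * f 1 <= f l.
Proof.
  intros Hf Hf' Hf'' l Hl.
  destruct (Req_dec l 0) as [->|Hl0]; [lra|].
  destruct (Req_dec l 1) as [->|Hl1]; [lra|].
  apply Rnot_lt_le; intros Hbelow.
  destruct (MVT_cor2 f f' 0 l ltac:(lra) (fun t Ht => Hf t ltac:(lra)))
    as [x1 [Hslope1 Hx1]].
  destruct (MVT_cor2 f f' l 1 ltac:(lra) (fun t Ht => Hf t ltac:(lra)))
    as [x2 [Hslope2 Hx2]].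
  assert (Hleft : f' x1 < f 1 - f 0) by nra.
  assert (Hright : f 1 - f 0 < f' x2) by nra.
  destruct (MVT_cor2 f' f'' x1 x2 ltac:(lra) (fun t Ht => Hf' t ltac:(lra)))
    as [y [Hslope3 Hy]].
  assert (f'' y <= 0) by (apply Hf''; lra).
  nra.
Qed.

Section ExpQuadratic.

Variables (c e a beta K : R).

Definition quad (t : R) : R := c * t ^ 2 + e * t + a.
Definition exp_quad (t : R) : R := exp (- beta * quad t).
Definition exp_quad' (t : R) : R := - beta * (2 * c * t + e) * exp_quad t.
Definition exp_quad'' (t : R) : R :=
  (beta ^ 2 * (2 * c * t + e) ^ 2 - 2 * beta * c) * exp_quad t.

Lemma exp_quad_derivative (t : R) : derivable_pt_lim exp_quad t (exp_quad' t).
Proof.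
  apply is_derive_Reals; unfold exp_quad', exp_quad, quad.
  auto_derive; auto; simpl; ring.
Qed.

Lemma exp_quad'_derivative (t : R) : derivable_pt_lim exp_quad' t (exp_quad'' t).
Proof.
  apply is_derive_Reals; unfold exp_quad'', exp_quad', exp_quad, quad.
  auto_derive; auto; simpl; ring.
Qed.

Hypothesis c_nonneg : 0 <= c.

Lemma quad_le_endpoints (t : R) :
  0 <= t <= 1 -> quad 0 <= K -> quad 1 <= K -> quad t <= K.
Proof.
  intros Ht H0 H1; unfold quad in *.
  assert (0 <= t * (1 - t) * c) by (apply Rmult_le_pos; nra).
  nra.
Qed.

Hypotheses (beta_nonneg : 0 <= beta) (discriminant_nonpos : e ^ 2 <= 4 * a * c)
  (quad0_le : quad 0 <= K) (quad1_le : quad 1 <= K) (beta_small : 2 * beta * K <= 1).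

(* Nonpositive discriminant gives q'^2 <= 4 c q, hence exp(-beta q)'' <= 0. *)
Lemma exp_quad''_nonpos (t : R) : 0 <= t <= 1 -> exp_quad'' t <= 0.
Proof.
  intros Ht; unfold exp_quad''.
  assert (Hq : quad t <= K) by (apply quad_le_endpoints; assumption).
  assert (Hderiv_sq : (2 * c * t + e) ^ 2 <= 4 * c * quad t) by (unfold quad; nra).
  assert (Hbound : beta * (2 * c * t + e) ^ 2 <= 2 * c).
  { apply Rle_trans with (beta * (4 * c * quad t)).
    - apply Rmult_le_compat_l; lra.
    - assert (beta * quad t <= beta * K) by (apply Rmult_le_compat_l; lra). nra. }
  assert (0 < exp_quad t) by apply exp_pos.
  assert (beta ^ 2 * (2 * c * t + e) ^ 2 - 2 * beta * c <= 0) by nra.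
  nra.
Qed.

Lemma exp_quad_above_chord (l : R) :
  0 <= l <= 1 -> (1 - l) * exp_quad 0 + l * exp_quad 1 <= exp_quad l.
Proof.
  apply (chord_le_of_second_derivative_nonpos exp_quad exp_quad' exp_quad'').
  - intros t _; apply exp_quad_derivative.
  - intros t _; apply exp_quad'_derivative.
  - exact exp_quad''_nonpos.
Qed.

End ExpQuadratic.

(* For the side lengths a, b, c of a triangle, the quadratic
   c^2 t^2 + (b^2 - a^2 - c^2) t + a^2 has nonpositive discriminant; this is
   the factorization (b-a+c)(b+a-c)(a+c-b)(a+b+c) >= 0 (Heron's formula). *)
Lemma triangle_discriminant (a b c : R) :
  0 <= a -> 0 <= b -> 0 <= c ->
  b <= a + c -> a <= b + c -> c <= a + b ->
  (b ^ 2 - a ^ 2 - c ^ 2) ^ 2 <= 4 * a ^ 2 * c ^ 2.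
Proof.
  intros Ha Hb Hc Hab Hba Hc'.
  assert (0 <= (b - a + c) * (b + a - c) * (a + c - b) * (a + c + b))
    by (repeat apply Rmult_le_pos; lra).
  nra.
Qed.

Lemma geodesic_subsegment {M : Type} (d : M -> M -> R) (gamma : R -> M) (s t : R) :
  is_geodesic d gamma -> 0 <= s <= 1 -> 0 <= t <= 1 ->
  is_geodesic d (fun u => gamma ((1 - u) * s + u * t)).
Proof.
  intros Hg Hs Ht u v Hu Hv; simpl.
  replace ((1 - 0) * s + 0 * t) with s by ring.
  replace ((1 - 1) * s + 1 * t) with t by ring.
  rewrite (Hg ((1 - u) * s + u * t)) by nra. rewrite (Hg s t) by lra.
  replace ((1 - v) * s + v * t - ((1 - u) * s + u * t)) with ((v - u) * (t - s))
    by ring.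
  rewrite Rabs_mult; ring.
Qed.

Lemma curv_le0_subsegment {M : Type} (d : M -> M -> R) (gamma : R -> M) (p : M)
    (s t l : R) :
  curv_le0 d -> is_geodesic d gamma -> 0 <= s <= 1 -> 0 <= t <= 1 -> 0 <= l <= 1 ->
  (d p (gamma ((1 - l) * s + l * t))) ^ 2
    <= (1 - l) * (d p (gamma s)) ^ 2 + l * (d p (gamma t)) ^ 2
       - l * (1 - l) * (d (gamma s) (gamma t)) ^ 2.
Proof.
  intros Hcurv Hg Hs Ht Hl.
  apply (Hcurv p (gamma s) (gamma t) (fun u => gamma ((1 - u) * s + u * t)));
    [apply geodesic_subsegment; assumption | f_equal; ring | f_equal; ring | exact Hl].
Qed.

Lemma metric_discriminant {M : Type} (d : M -> M -> R) (p x y : M) :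
  is_metric d ->
  ((d p y) ^ 2 - (d p x) ^ 2 - (d x y) ^ 2) ^ 2
    <= 4 * (d p x) ^ 2 * (d x y) ^ 2.
Proof.
  intros [Hpos [_ [Hsym Htri]]].
  apply triangle_discriminant; try apply Hpos.
  - apply Htri.
  - rewrite (Hsym x y); apply Htri.
  - rewrite (Hsym p x); apply Htri.
Qed.

Lemma exp_neg_scale_antitone (beta x y : R) :
  0 <= beta -> x <= y -> exp (- beta * y) <= exp (- beta * x).
Proof.
  intros Hbeta Hxy.
  assert (Hexponent : - beta * y <= - beta * x) by nra.
  destruct Hexponent as [Hlt | ->]; [left; apply exp_increasing, Hlt | right; reflexivity].
Qed.

Theorem mainTheorem2 (M : Type) (d : M -> M -> R) (D : R) :
  is_metric d -> is_complete d -> is_geodesic_space d -> curv_le0 d ->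
  is_diameter d D -> 0 < D ->
  forall (p : M) (beta : R), 0 < beta -> beta <= 1 / (2 * D ^ 2) ->
    geod_expconcave d beta (fun x => (d p x) ^ 2).
Proof.
  intros Hmetric _ _ Hcurv [Hdiam _] HD p beta Hbeta Hbeta_le.
  intros gamma Hg s t l Hs Ht Hl; simpl.
  set (a := d p (gamma s)); set (b := d p (gamma t)); set (c := d (gamma s) (gamma t)).
  assert (Hbeta_small : 2 * beta * D ^ 2 <= 1).
  { apply Rmult_le_compat_r with (r := 2 * D ^ 2) in Hbeta_le; [|nra].
    replace (1 / (2 * D ^ 2) * (2 * D ^ 2)) with 1 in Hbeta_le by (field; lra).
    lra. }
  assert (Ha : a <= D) by (apply Hdiam; exists p, (gamma s); reflexivity).
  assert (Hb : b <= D) by (apply Hdiam; exists p, (gamma t); reflexivity).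
  assert (Ha0 : 0 <= a) by apply Hmetric. assert (Hb0 : 0 <= b) by apply Hmetric.
  pose proof (exp_quad_above_chord (c ^ 2) (b ^ 2 - a ^ 2 - c ^ 2) (a ^ 2) beta (D ^ 2)
    ltac:(nra) ltac:(lra) (metric_discriminant d p (gamma s) (gamma t) Hmetric)
    ltac:(unfold quad; nra) ltac:(unfold quad; nra) Hbeta_small l Hl) as Hchord.
  unfold exp_quad, quad in Hchord.
  replace (c ^ 2 * 0 ^ 2 + (b ^ 2 - a ^ 2 - c ^ 2) * 0 + a ^ 2) with (a ^ 2)
    in Hchord by ring.
  replace (c ^ 2 * 1 ^ 2 + (b ^ 2 - a ^ 2 - c ^ 2) * 1 + a ^ 2) with (b ^ 2)
    in Hchord by ring.
  eapply Rle_trans; [exact Hchord|].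
  apply exp_neg_scale_antitone; [lra|].
  replace (c ^ 2 * l ^ 2 + (b ^ 2 - a ^ 2 - c ^ 2) * l + a ^ 2)
    with ((1 - l) * a ^ 2 + l * b ^ 2 - l * (1 - l) * c ^ 2) by ring.
  exact (curv_le0_subsegment d gamma p s t l Hcurv Hg Hs Ht Hl).
Qed.
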